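(* Let $a(n,k)$ be the number of non-squashing partitions of $n$ into exactly $k$ parts and $b(n,k)$ the number of non-squashing partitions of $n$ into exactly $k$ distinct parts (with $a(n,k)=0$ for $n<0$). Then $b(n,0)=a(n,0)$ and $b(n,1)=a(n,1)$ for all $n\ge0$, and $b(n,k)=a(n-2^{k-2},k)$ for all $n\ge0$, $k\ge2$. Moreover, for $k\ge2$, $$\sum_{n\ge0}b(n,k)x^n=\frac{x^{3\cdot2^{k-2}}}{\prod_{j=0}^{k-1}\left(1-x^{2^j}\right)},$$ so that for $k\ge2$, $b(n,k)$ equals the number of partitions of $n-3\cdot2^{k-2}$ into powers of $2$ not exceeding $2^{k-1}$.
   Context: A partition $n=p_1+\cdots+p_k$ with $1\le p_1\le\cdots\le p_k$ is non-squashing if $p_1+\cdots+p_j\le p_{j+1}$ for all $1\le j\le k-1$. The empty partition is the unique partition of $0$ and has $0$ parts. *)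

From mathcomp Require Import all_boot all_order all_algebra.
Set Implicit Arguments. Unset Strict Implicit. Unset Printing Implicit Defensive.

(* A partition is represented as the nondecreasing list of its parts
   [p_1; ...; p_k] with all p_i >= 1. *)
Definition is_partition (s : seq nat) : bool :=
  sorted leq s && all (fun p => 0 < p) s.

(* non-squashing: p_1 + ... + p_j <= p_{j+1} for all 1 <= j <= k-1
   (list index j is p_{j+1}, take j s = [p_1; ...; p_j]). *)
Definition non_squashing (s : seq nat) : bool :=
  is_partition s &&
  all (fun j => sumn (take j s) <= nth 0 s j) (iota 1 (size s).-1).

(* a(n,k): non-squashing partitions of n into exactly k parts.
   Every part of a partition of n is <= n, so parts live in 'I_n.+1. *)
Definition a_ns (n k : nat) : nat :=
  #|[set t : k.-tuple 'I_n.+1 |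
      non_squashing (map val t) && (sumn (map val t) == n)]|.

Definition b_ns (n k : nat) : nat :=
  #|[set t : k.-tuple 'I_n.+1 |
      [&& non_squashing (map val t), uniq (map val t) & sumn (map val t) == n]]|.

Definition is_pow2_le (e : nat) (p : nat) : bool :=
  has (fun i => p == 2 ^ i) (iota 0 e.+1).

(* number of partitions of m into powers of 2 not exceeding 2^e
   (a partition of m has at most m parts, each at most m). *)
Definition pow2_part_count (m e : nat) : nat :=
  \sum_(l < m.+1)
    #|[set t : l.-tuple 'I_m.+1 |
        [&& is_partition (map val t), all (is_pow2_le e) (map val t)
          & sumn (map val t) == m]]|.

(* If s has at least one part, rcons s x is non-squashing iff s is and x >= sumn s.
   Classifying by the sum m of all parts but the largest gives
   a(n, k+2) = sum_(m <= n/2) a(m, k+1).  The same recurrence holds for b as soon as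
   there are two earlier parts, since x >= sumn s then exceeds each of them; with a single
   earlier part p, the condition x <> p costs one unit: b(n+1, 2) = a(n, 2).
   The number binpart e N of partitions of N into powers of 2 at most 2^e satisfies the
   same halving recurrence, whence a(n, k+1) = binpart k (n - 2^k) and
   b(n, k+2) = a(n - 2^k, k+2) = binpart (k+1) (n - 3 * 2^k).  Splitting off the parts
   equal to 2^e gives binpart e N = binpart (e-1) N + binpart e (N - 2^e), i.e. the
   generating function of binpart e is 1 / prod_(j <= e) (1 - x^(2^j)); splitting off
   the largest part identifies binpart with pow2_part_count. *)

From mathcomp Require Import all_boot all_order all_algebra.
From mathcomp Require Import zify.
Import GRing.Theory.
Set Implicit Arguments. Unset Strict Implicit. Unset Printing Implicit Defensive.

Lemma mem_leq_sumn (s : seq nat) x : x \in s -> x <= sumn s.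
Proof.
elim: s => [//|y s IHs]; rewrite inE /= => /predU1P[->|/IHs]; first exact: leq_addr.
by move/leq_trans; apply; apply: leq_addl.
Qed.

Lemma size_leq_sumn (s : seq nat) : all (fun x => 0 < x) s -> size s <= sumn s.
Proof. by elim: s => [|x s IHs] //= /andP[x_pos /IHs]; rewrite -add1n; apply: leq_add. Qed.

Lemma mem_ltn_sumn (s : seq nat) y : 1 < size s -> all (fun x => 0 < x) s ->
  y \in s -> y < sumn s.
Proof.
move=> s_gt1 s_pos y_s.
rewrite (perm_sumn (perm_to_rem y_s)) /= -[y in y < _]addn0 ltn_add2l.
have rem_pos : all (fun x => 0 < x) (rem y s).
  by apply/allP => z /mem_rem; apply: (allP s_pos).
by apply: leq_trans (size_leq_sumn rem_pos); rewrite size_rem // -ltnS prednK // ltnW.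
Qed.

Lemma sorted_leq_rcons (s : seq nat) x :
  sorted leq (rcons s x) = sorted leq s && all (fun y => y <= x) s.
Proof.
by rewrite -cats1 !(sorted_pairwise leq_trans) pairwise_cat allrel1r /= !andbT andbC.
Qed.

Fixpoint bounded_seqs (N k : nat) : seq (seq nat) :=
  if k is k'.+1 then [seq rcons s x | s <- bounded_seqs N k', x <- iota 0 N]
  else [:: [::]].

Lemma mem_bounded_seqs N k s :
  (s \in bounded_seqs N k) = (size s == k) && all (fun x => x < N) s.
Proof.
elim: k s => [|k IHk] s /=; first by rewrite inE; case: s.
apply/allpairsP/idP => [[[t x] /= [t_in x_in ->]]|].
  move: t_in; rewrite IHk size_rcons eqSS all_rcons => /andP[-> ->].
  by rewrite mem_iota in x_in; rewrite andbT.
case/lastP: s => [//|t x]; rewrite size_rcons eqSS all_rcons.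
case/andP=> t_k /andP[x_lt t_lt]; exists (t, x).
by rewrite IHk t_k t_lt mem_iota.
Qed.

Lemma bounded_seqs_uniq N k : uniq (bounded_seqs N k).
Proof.
elim: k => [//|k IHk] /=; apply: allpairs_uniq => // [|[s x] [t y] _ _ /=].
  exact: iota_uniq.
exact: rcons_inj.
Qed.

Lemma count_bounded_seqsS (P : pred (seq nat)) N k :
  count P (bounded_seqs N k.+1) =
  \sum_(s <- bounded_seqs N k) \sum_(x < N) P (rcons s x).
Proof.
rewrite /= /allpairs_dep count_flatten sumnE !big_map; apply: eq_bigr => s _.
rewrite count_map -sum1_count big_mkcond -[N in iota 0 N]subn0 -/(index_iota 0 N).
by rewrite big_mkord.
Qed.

Lemma card_bounded_tuples (P : pred (seq nat)) n k :
  #|[set t : k.-tuple 'I_n.+1 | P (map val t)]| = count P (bounded_seqs n.+1 k).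
Proof.
rewrite cardE -size_filter -(size_map (fun t : k.-tuple 'I_n.+1 => map val t)).
apply/perm_size/uniq_perm.
- rewrite map_inj_uniq ?enum_uniq // => t u /= tu.
  exact/val_inj/(inj_map val_inj).
- by rewrite filter_uniq ?bounded_seqs_uniq.
move=> s; rewrite mem_filter mem_bounded_seqs; apply/mapP/idP.
  case=> t; rewrite mem_enum inE => Pt ->.
  by rewrite Pt size_map size_tuple eqxx /=; apply/allP => _ /mapP[i _ ->].
case/andP=> Ps /andP[/eqP s_k s_lt].
have sz : size (map (inord : nat -> 'I_n.+1) s) == k by rewrite size_map s_k.
have val_s : map val (map (inord : nat -> 'I_n.+1) s) = s.
  by rewrite -map_comp map_id_in // => x /(allP s_lt) /= /inordK.
by exists (Tuple sz); rewrite ?mem_enum ?inE /= val_s.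
Qed.

Definition parts_count (P : pred (seq nat)) (n k : nat) : nat :=
  count (fun s => P s && (sumn s == n)) (bounded_seqs n.+1 k).

Lemma parts_count_widen P n N k : n < N ->
  count (fun s => P s && (sumn s == n)) (bounded_seqs N k) = parts_count P n k.
Proof.
move=> lt_nN; rewrite /parts_count -!size_filter; apply/perm_size/uniq_perm;
  rewrite ?filter_uniq ?bounded_seqs_uniq // => s.
rewrite !mem_filter !mem_bounded_seqs.
case: (boolP (P s && _)) => //= /andP[_ /eqP sum_s].
have lt_n : all (fun x => x < n.+1) s.
  by apply/allP => x /mem_leq_sumn; rewrite sum_s ltnS.
rewrite lt_n; congr andb; apply/allP => x x_s.
exact: leq_trans (allP lt_n x x_s) lt_nN.
Qed.

Lemma eq_parts_count P Q n k :
  (forall s, size s = k -> sumn s = n -> P s = Q s) ->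
  parts_count P n k = parts_count Q n k.
Proof.
move=> PQ; apply: eq_in_count => s; rewrite mem_bounded_seqs => /andP[/eqP s_k _].
by case: eqP => [/(PQ s s_k)->|]; rewrite ?andbF.
Qed.

Lemma parts_count_andr P (b : bool) n k :
  parts_count (fun s => P s && b) n k = b * parts_count P n k.
Proof.
rewrite /parts_count; case: b; first by rewrite mul1n; apply: eq_count => s; rewrite andbT.
by rewrite (@eq_count _ _ pred0) ?count_pred0 // => s; rewrite andbF.
Qed.

Lemma parts_count_rcons P n k :
  parts_count P n k.+1 =
  \sum_(x < n.+1) parts_count (fun s => P (rcons s x)) (n - x) k.
Proof.
rewrite {1}/parts_count count_bounded_seqsS exchange_big /=; apply: eq_bigr => x _.
rewrite -(@parts_count_widen _ _ n.+1) ?ltnS ?leq_subr // -sum1_count [RHS]big_mkcond.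
apply: eq_bigr => s _; rewrite sumn_rcons.
suff -> : (sumn s + x == n) = (sumn s == n - x) by [].
by have := ltn_ord x; lia.
Qed.

Lemma parts_count_eq0 (P : pred (seq nat)) n k :
  (forall s, P s -> all (fun x => 0 < x) s) -> n < k -> parts_count P n k = 0.
Proof.
move=> P_pos lt_nk; rewrite /parts_count (@eq_in_count _ _ pred0) ?count_pred0 // => s.
rewrite mem_bounded_seqs => /andP[/eqP s_k _] /=; apply/negP => /andP[/P_pos].
move/size_leq_sumn => le_s /eqP sum_s.
by move: lt_nk; rewrite -s_k -sum_s ltnNge le_s.
Qed.

Lemma sum_rev_half (F : nat -> nat) c n :
  \sum_(x < (n + c).+1) (n + c - x + c <= x) * F (n + c - x) =
  \sum_(m < (n %/ 2).+1) F m.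
Proof.
have le_half : (n %/ 2).+1 <= (n + c).+1 by rewrite ltnS; lia.
rewrite (big_ord_widen _ F le_half) [RHS]big_mkcond [LHS](reindex_inj rev_ord_inj) /=.
apply: eq_bigr => x _; have le_x : x <= n + c := ltn_ord x.
rewrite subSS subKn //.
have -> : (x + c <= n + c - x) = (x < (n %/ 2).+1) by apply/idP/idP; lia.
by case: ifP; rewrite ?mul1n.
Qed.

Lemma parts_count_last_ge P c n k :
  (forall s x, size s = k.+1 -> P (rcons s x) = P s && (sumn s + c <= x)) ->
  parts_count P (n + c) k.+2 = \sum_(m < (n %/ 2).+1) parts_count P m k.+1.
Proof.
move=> P_rcons; rewrite parts_count_rcons -(sum_rev_half (parts_count P ^~ k.+1) c).
apply: eq_bigr => x _; rewrite -parts_count_andr.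
by apply: eq_parts_count => s s_k sum_s; rewrite P_rcons // sum_s.
Qed.

Lemma non_squashing_pos s : non_squashing s -> all (fun x => 0 < x) s.
Proof. by case/andP=> /andP[]. Qed.

Lemma non_squashing1 x : non_squashing [:: x] = (0 < x).
Proof. by rewrite /non_squashing /is_partition /= !andbT. Qed.

Lemma non_squashing_rcons s x : 0 < size s ->
  non_squashing (rcons s x) = non_squashing s && (sumn s <= x).
Proof.
case: s => [//|p s] _; set t := p :: s.
have iota_t : iota 1 (size t) = rcons (iota 1 (size s)) (size t).
  by rewrite -cats1 -(iotaD 1 (size s) 1) addn1.
rewrite /non_squashing /is_partition size_rcons -pred_Sn iota_t !all_rcons.
rewrite nth_rcons ltnn eqxx -cats1 take_size_cat // cats1 sorted_leq_rcons.
have -> : all (fun j => sumn (take j (rcons t x)) <= nth 0 (rcons t x) j)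
              (iota 1 (size s)) =
          all (fun j => sumn (take j t) <= nth 0 t j) (iota 1 (size s)).
  apply: eq_in_all => j; rewrite mem_iota add1n ltnS => /andP[_ le_js].
  have lt_jt : j < size t by rewrite ltnS.
  by rewrite nth_rcons lt_jt -cats1 takel_cat // ltnW.
apply/idP/idP; first by case/and3P=> /and3P[/andP[-> _] _ ->] -> ->.
case/andP=> /andP[/andP[-> pos_t] ->] le_tx.
have le_t : all (fun y => y <= x) t.
  by apply/allP => y /mem_leq_sumn /leq_trans; apply.
have pos_x : 0 < x by case/andP: pos_t => pos_p _; move: le_tx => /=; lia.
by rewrite le_t pos_x pos_t le_tx.
Qed.

Lemma a_ns_parts n k : a_ns n k = parts_count non_squashing n k.
Proof. exact: (card_bounded_tuples (fun s => non_squashing s && (sumn s == n))). Qed.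

Lemma b_ns_parts n k :
  b_ns n k = parts_count (fun s => non_squashing s && uniq s) n k.
Proof.
rewrite /b_ns (card_bounded_tuples (fun s => [&& non_squashing s, uniq s & sumn s == n])).
by apply: eq_count => s; rewrite andbA.
Qed.

Lemma a_ns1 n : a_ns n 1 = (0 < n).
Proof.
rewrite a_ns_parts parts_count_rcons big_ord_recr /= subnn big1 => [|x _].
  by rewrite /parts_count /= non_squashing1 andbT add0n addn0.
by rewrite /parts_count /= eq_sym subn_eq0 leqNgt ltn_ord andbF.
Qed.

Lemma a_nsSS n k : a_ns n k.+2 = \sum_(m < (n %/ 2).+1) a_ns m k.+1.
Proof.
rewrite a_ns_parts -[in LHS](addn0 n) (parts_count_last_ge (c := 0)).
  by apply: eq_bigr => m _; rewrite a_ns_parts.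
by move=> s x s_k; rewrite addn0 non_squashing_rcons ?s_k.
Qed.

Lemma b_ns0_2 : b_ns 0 2 = 0.
Proof. by rewrite b_ns_parts parts_count_eq0 // => s /andP[/non_squashing_pos]. Qed.

Lemma b_nsS_2 n : b_ns n.+1 2 = a_ns n 2.
Proof.
rewrite a_nsSS b_ns_parts -[n.+1]addn1 (parts_count_last_ge (c := 1)).
  apply: eq_bigr => m _; rewrite a_ns_parts.
  by apply: eq_parts_count => -[|p [|]] //; rewrite andbT.
move=> [|p [|]] // x _; rewrite non_squashing_rcons //= inE !andbT !addn0 addn1.
by rewrite -andbA (andbC (p <= x)) ltn_neqAle.
Qed.

Lemma b_nsSSS n k : b_ns n k.+3 = \sum_(m < (n %/ 2).+1) b_ns m k.+2.
Proof.
rewrite b_ns_parts -[in LHS](addn0 n) (parts_count_last_ge (c := 0)).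
  by apply: eq_bigr => m _; rewrite b_ns_parts.
move=> s x s_k; rewrite addn0 non_squashing_rcons ?s_k // rcons_uniq.
case ns_s: (non_squashing s) => //=; case: leqP => [le_sx|]; rewrite ?andbF //.
suff -> : x \notin s by rewrite andbT.
have size_s : 1 < size s by rewrite s_k.
by apply/negP => /(mem_ltn_sumn size_s (non_squashing_pos ns_s)); rewrite ltnNge le_sx.
Qed.

Lemma sum_half_shift (F : nat -> nat) c n :
  \sum_(m < (n %/ 2).+1) (if c <= m then F (m - c) else 0) =
  if c.*2 <= n then \sum_(m < ((n - c.*2) %/ 2).+1) F m else 0.
Proof.
case: leqP => [le_cn|lt_nc]; last first.
  by rewrite big1 // => m _; case: leqP => // le_cm; have := ltn_ord m; lia.
have -> : (n - c.*2) %/ 2 = n %/ 2 - c by lia.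
have le_c_half : c <= n %/ 2 by lia.
rewrite -(big_mkord xpredT (fun m => if c <= m then F (m - c) else 0)).
rewrite (big_cat_nat (leq0n c)) ?leqW //= [X in X + _]big1_seq ?add0n; last first.
  by move=> m; rewrite mem_index_iota => /andP[_ /andP[_ lt_mc]]; rewrite leqNgt lt_mc.
rewrite -{1}[c]add0n big_addn subSn // big_mkord.
by apply: eq_bigr => m _; rewrite leq_addl addnK.
Qed.

(* Dropping the parts equal to 1 and halving the others. *)
Fixpoint binpart (e N : nat) : nat :=
  if e is e'.+1 then \sum_(m < (N %/ 2).+1) binpart e' m else 1.

Lemma binpartS e N : binpart e.+1 N =
  binpart e N + (if 2 ^ e.+1 <= N then binpart e.+1 (N - 2 ^ e.+1) else 0).
Proof.
elim: e N => [|e IHe] N.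
  rewrite /= !sum_nat_const !card_ord !muln1 expn1; case: leqP; lia.
have -> : binpart e.+2 N = \sum_(m < (N %/ 2).+1) binpart e.+1 m by [].
under eq_bigr => m _ do rewrite IHe.
by rewrite big_split sum_half_shift [2 ^ e.+2]expnS mul2n.
Qed.

Lemma binpart_max_part e N : binpart e N =
  (N == 0) + \sum_(i < e.+1) (if 2 ^ i <= N then binpart i (N - 2 ^ i) else 0).
Proof.
elim: e => [|e IHe]; first by rewrite big_ord1 /= expn0; case: N.
by rewrite big_ord_recr /= addnA -IHe -binpartS.
Qed.

Lemma a_ns_binpart n k :
  a_ns n k.+1 = if 2 ^ k <= n then binpart k (n - 2 ^ k) else 0.
Proof.
elim: k n => [|k IHk] n; first by rewrite a_ns1 expn0; case: n.
rewrite a_nsSS; under eq_bigr => m _ do rewrite IHk.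
by rewrite sum_half_shift -mul2n -expnS.
Qed.

Lemma b_ns_shift n k :
  b_ns n k.+2 = if 2 ^ k <= n then a_ns (n - 2 ^ k) k.+2 else 0.
Proof.
elim: k n => [[|n]|k IHk n]; first exact: b_ns0_2.
  by rewrite b_nsS_2 expn0 subn1.
rewrite b_nsSSS; under eq_bigr => m _ do rewrite IHk.
by rewrite (sum_half_shift (a_ns ^~ k.+2)) -a_nsSS -mul2n -expnS.
Qed.

Lemma b_ns_binpart n k : b_ns n k.+2 =
  if 3 * 2 ^ k <= n then binpart k.+1 (n - 3 * 2 ^ k) else 0.
Proof.
rewrite b_ns_shift a_ns_binpart expnS.
case: (leqP (2 ^ k) n) => [le_kn|lt_nk]; last by rewrite leqNgt (leq_trans lt_nk) ?leq_pmull.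
have -> : (2 * 2 ^ k <= n - 2 ^ k) = (3 * 2 ^ k <= n) by lia.
by rewrite -subnDA -{2}[2 ^ k]mul1n -mulnDl.
Qed.

Lemma sum_pick (F : nat -> nat) (c n : nat) :
  \sum_(i < n.+1) (val i == c) * F i = (c <= n) * F c.
Proof.
case: (ltnP c n.+1) => [lt_cn|lt_nc].
  rewrite (bigD1 (Ordinal lt_cn)) //= eqxx mul1n -ltnS lt_cn mul1n big1 ?addn0 // => i.
  by rewrite -val_eqE /= => /negbTE ->.
rewrite leqNgt lt_nc big1 // => i _.
by case: eqP => [eq_ic|]; [have := ltn_ord i; rewrite eq_ic ltnNge lt_nc | rewrite mul0n].
Qed.

Lemma is_pow2_leP e p : reflect (exists2 i, i <= e & p = 2 ^ i) (is_pow2_le e p).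
Proof.
apply: (iffP hasP) => [[i le_ie /eqP ->]|[i le_ie ->]]; exists i => //.
  by move: le_ie; rewrite mem_iota.
by rewrite mem_iota.
Qed.

Lemma sum_pow2_support (F : nat -> nat) e M :
  (forall x, ~~ is_pow2_le e x -> F x = 0) ->
  \sum_(x < M.+1) F x = \sum_(i < e.+1) (2 ^ i <= M) * F (2 ^ i).
Proof.
move=> F_supp; have pow2_indicator x : \sum_(i < e.+1) (x == 2 ^ i) = is_pow2_le e x.
  case: is_pow2_leP => [[j le_je ->]|not_pow2].
    transitivity (\sum_(i < e.+1) (val i == j) * 1).
      by apply: eq_bigr => i _; rewrite muln1 eq_sym eqn_exp2l.
    by rewrite (sum_pick (fun=> 1)) le_je.
  rewrite big1 // => i _; case: eqP => // eq_x.
  by case: not_pow2; exists i; first exact: ltn_ord i.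
transitivity (\sum_(x < M.+1) \sum_(i < e.+1) (val x == 2 ^ i) * F x).
  apply: eq_bigr => x _; rewrite -big_distrl /= pow2_indicator.
  by case: (boolP (is_pow2_le e x)) => [_|/F_supp ->]; rewrite ?mul1n ?muln0.
by rewrite exchange_big; apply: eq_bigr => i _; rewrite sum_pick.
Qed.

Definition pow2_partition (e : nat) (s : seq nat) : bool :=
  is_partition s && all (is_pow2_le e) s.

Lemma pow2_partition_rcons e i s : i <= e ->
  pow2_partition e (rcons s (2 ^ i)) = pow2_partition i s.
Proof.
move=> le_ie; rewrite /pow2_partition /is_partition sorted_leq_rcons !all_rcons expn_gt0 /=.
have -> : is_pow2_le e (2 ^ i) by apply/is_pow2_leP; exists i.
have le_pow2 : all (fun y => y <= 2 ^ i) s && all (is_pow2_le e) s = all (is_pow2_le i) s.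
  rewrite -all_predI; apply: eq_all => y /=; apply/andP/is_pow2_leP.
    by case=> le_y /is_pow2_leP[j _ eq_y]; exists j => //; rewrite eq_y leq_exp2l in le_y.
  case=> j le_ji ->; rewrite leq_exp2l //; split=> //.
  by apply/is_pow2_leP; exists j; first exact: leq_trans le_ie.
by rewrite -le_pow2 andTb -!andbA; congr andb; apply: andbCA.
Qed.

Lemma parts_count_pow2S e M l :
  parts_count (pow2_partition e) M l.+1 =
  \sum_(i < e.+1) (2 ^ i <= M) * parts_count (pow2_partition i) (M - 2 ^ i) l.
Proof.
rewrite parts_count_rcons (@sum_pow2_support
  (fun x => parts_count (fun s => pow2_partition e (rcons s x)) (M - x) l) e) => [|x not_pow2].
  apply: eq_bigr => i _; congr muln.
  by apply: eq_parts_count => s _ _; rewrite pow2_partition_rcons // -ltnS.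
rewrite /parts_count (@eq_count _ _ pred0) ?count_pred0 // => s.
by rewrite /pow2_partition all_rcons (negbTE not_pow2) !andbF.
Qed.

Lemma pow2_part_count_binpart M e : pow2_part_count M e = binpart e M.
Proof.
have -> : pow2_part_count M e = \sum_(l < M.+1) parts_count (pow2_partition e) M l.
  apply: eq_bigr => l _.
  rewrite (card_bounded_tuples
    (fun s => [&& is_partition s, all (is_pow2_le e) s & sumn s == M])).
  by apply: eq_count => s; rewrite andbA.
elim/ltn_ind: M e => M IHM e.
rewrite big_ord_recl binpart_max_part; congr addn.
  by rewrite /parts_count /= addn0 eq_sym.
under eq_bigr => l _ do rewrite lift0 parts_count_pow2S.
rewrite exchange_big; apply: eq_bigr => i _; rewrite -big_distrr /=.
case: leqP => [le_iM|_]; last by rewrite mul0n.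
have lt_M : M - 2 ^ i < M by have := expn_gt0 2 i; lia.
rewrite mul1n -IHM // (big_ord_widen _ (fun l => parts_count _ _ l) lt_M) [RHS]big_mkcond.
apply: eq_bigr => l _; case: ltnP => // lt_l; rewrite parts_count_eq0 //.
by move=> s /andP[/andP[_ pos_s] _].
Qed.

Local Open Scope ring_scope.

Lemma eq_low_coefMr (R : nzRingType) (p q r : {poly R}) n :
  (forall i, (i <= n)%N -> p`_i = q`_i) ->
  forall i, (i <= n)%N -> (p * r)`_i = (q * r)`_i.
Proof.
move=> pq i le_in; rewrite !coefM; apply: eq_bigr => j _.
by rewrite pq // (leq_trans _ le_in) // -ltnS.
Qed.

Lemma binpart_gf_step (R : nzRingType) e n i : (i <= n)%N ->
  ((\poly_(m < n.+1) (binpart e.+1 m)%:R : {poly R}) * (1 - 'X^(2 ^ e.+1)))`_i =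
  (\poly_(m < n.+1) (binpart e m)%:R)`_i.
Proof.
move=> le_in; rewrite mulrBr mulr1 coefB coefMXn !coef_poly ltnS le_in binpartS natrD.
case: ltnP => [|le_ei]; first by rewrite addr0 subr0.
by rewrite ltnS (leq_trans (leq_subr _ _) le_in) addrK.
Qed.

Lemma binpart_gf (R : comNzRingType) e n i : (i <= n)%N ->
  ((\poly_(m < n.+1) (binpart e m)%:R : {poly R}) * \prod_(j < e.+1) (1 - 'X^(2 ^ j)))`_i =
  (i == 0)%:R.
Proof.
elim: e i => [|e IHe] i le_in.
  rewrite big_ord1 expn0 expr1 mulrBr mulr1 coefB coefMX !coef_poly ltnS le_in /=.
  by case: i le_in => [|i] le_in /=; rewrite ?subr0 // ltnS ltnW // subrr.
rewrite big_ord_recr mulrA mulrAC.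
rewrite (@eq_low_coefMr _ _ (\poly_(m < n.+1) (binpart e m)%:R) _ n) //; first exact: IHe.
by move=> j le_jn; rewrite binpart_gf_step.
Qed.

Lemma b_ns_gf (R : comNzRingType) k n :
  ((\sum_(m < n.+1) (b_ns m k.+2)%:R *: 'X^m) * \prod_(j < k.+2) (1 - 'X^(2 ^ j))
     : {poly R})`_n = ('X^(3 * 2 ^ k) : {poly R})`_n.
Proof.
set s := (3 * 2 ^ k)%N; rewrite -(poly_def n.+1 (fun m => (b_ns m k.+2)%:R)).
(* The shifted series agrees with the truncated one up to degree n, also when s > n. *)
rewrite (@eq_low_coefMr _ _ ('X^s * \poly_(m < (n - s).+1) (binpart k.+1 m)%:R) _ n) //.
  rewrite -mulrA coefXnM binpart_gf // coefXn.
  by case: ltnP => [lt_ns|le_sn]; [rewrite ltn_eqF | rewrite subn_eq0 eqn_leq le_sn andbT].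
move=> i le_in; rewrite coefXnM !coef_poly ltnS le_in b_ns_binpart -/s.
by case: ltnP => // le_si; rewrite ltnS leq_sub2r.
Qed.

Local Close Scope ring_scope.

Theorem theorem4 :
  (forall n : nat, b_ns n 0 = a_ns n 0 /\ b_ns n 1 = a_ns n 1) /\
  (forall n k : nat, 2 <= k ->
     b_ns n k = (if 2 ^ (k - 2) <= n then a_ns (n - 2 ^ (k - 2)) k else 0)) /\
  (forall k : nat, 2 <= k -> forall n : nat,
     (((\sum_(m < n.+1) ((b_ns m k)%:R : int) *: 'X^m)
        * \prod_(j < k) (1 - 'X^(2 ^ j)) : {poly int})`_n
      = ('X^(3 * 2 ^ (k - 2)) : {poly int})`_n)%R) /\
  (forall n k : nat, 2 <= k ->
     b_ns n k = (if 3 * 2 ^ (k - 2) <= n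
                 then pow2_part_count (n - 3 * 2 ^ (k - 2)) (k - 1) else 0)).
Proof.
split; [|split; [|split]].
- move=> n; rewrite !b_ns_parts !a_ns_parts; split; apply: eq_parts_count.
    by case.
  by move=> [|x []] //= _ _; rewrite andbT.
- by move=> n [|[|k]] // _; rewrite !subSS subn0 b_ns_shift.
- by move=> [|[|k]] // _ n; rewrite !subSS subn0 b_ns_gf.
- by move=> n [|[|k]] // _; rewrite !subSS !subn0 b_ns_binpart pow2_part_count_binpart.
Qed.
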